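(* For all $n\ge1$, \[ \sum_{\sigma\in\mathcal{C}_{2n+3}} t^{\mathrm{drop}(\sigma)-1}=\sum_{j=0}^{\lfloor n/2\rfloor}\gamma_{n,j}\,t^j(1+t)^{n-2j}, \] where $\gamma_{n,j}$ is the number of primary odd-odd-drop permutations in $\mathcal{C}_{2n+3}$ with $j+1$ drops.
   Context: For $\sigma\in\mathfrak{S}_m$, a drop is a pair $(i,\sigma(i))$ with $i>\sigma(i)$; $\mathrm{drop}(\sigma)$ is the number of drops; a drop is odd-odd if both $i$ and $\sigma(i)$ are odd. $\mathcal{C}_m$ is the set of cyclic permutations of $[m]$ (a single $m$-cycle) all of whose drops are odd-odd. An element $i\in[m]$ is a double drop of $\sigma$ if $\sigma^{-1}(i)>i>\sigma(i)$. A permutation $\sigma\in\mathcal{C}_{2n+3}$ is a primary odd-odd-drop permutation if it has no double drop. *)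

(* Convention: [m] = {1..m} is represented by 'I_m = {0..m-1},
   the element i : 'I_m standing for the integer i+1. *)
From mathcomp Require Import all_boot all_order all_algebra all_fingroup.
Set Implicit Arguments. Unset Strict Implicit. Unset Printing Implicit Defensive.
Import GRing.Theory.

Definition oddpos (m : nat) (i : 'I_m) : bool := odd (i : nat).+1.

Definition is_drop (m : nat) (s : 'S_m) (i : 'I_m) : bool := s i < i.

Definition dropn (m : nat) (s : 'S_m) : nat := #|[set i | is_drop s i]|.

Definition is_cyclic (m : nat) (s : 'S_m) : bool := #|porbits s| == 1.

Definition odd_odd_drops (m : nat) (s : 'S_m) : bool :=
  [forall i, is_drop s i ==> (oddpos i && oddpos (s i))].

Definition inC (m : nat) (s : 'S_m) : bool := is_cyclic s && odd_odd_drops s.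

Definition double_drop (m : nat) (s : 'S_m) (i : 'I_m) : bool :=
  (i < (s^-1)%g i) && (s i < i).

Definition primary (m : nat) (s : 'S_m) : bool :=
  inC s && [forall i, ~~ double_drop s i].

Definition gamma (n j : nat) : nat :=
  #|[set s : 'S_(2 * n + 3) | primary s && (dropn s == j.+1)]|.

(* Gamma-positivity of the drop polynomial of C_{2n+3}, by a cyclic analogue
   of the Foata-Strehl "hopping" action.

   Call z a (cyclic) double ascent of a permutation r if r^-1 z < z < r z,
   and a double drop if r^-1 z > z > r z.  For a double ascent z, [hop r z]
   removes z from its cycle and reinserts it right after the maximal run of
   elements larger than z that follows it, i.e. just before the first later
   element smaller than z.  The hop
   - turns z into a double drop and keeps, for every x <> z, the comparisons
     of x with its image and its preimage;
   - keeps an m-cycle an m-cycle and adds exactly one drop;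
   - is inverted by [unhop], the same construction applied to r^-1.
   Hopping an odd element keeps all drops odd-odd.  Hence r |-> (r with all
   its double drops unhopped, set of its double drops) is a bijection from
   C_m onto the pairs (pi, S) with pi primary and S a set of odd double
   ascents of pi, and drop r = drop pi + |S|; summing over S produces the
   factor (1 + t)^(number of odd double ascents of pi).  Finally, in a
   primary pi of C_(2n+3) every even element is a double ascent and the
   other elements are exactly the drop positions and drop values, so pi has
   n - 2j odd double ascents when drop pi = j + 1.

   As in Defs, an element x : 'I_m stands for the integer x + 1; thus the
   integer is odd iff [oddpos x], i.e. iff x is even. *)
From Pilot Require Import Defs.
From mathcomp Require Import all_boot all_order all_algebra all_fingroup.
From mathcomp Require Import zify.
Import GRing.Theory.

Set Implicit Arguments. Unset Strict Implicit. Unset Printing Implicit Defensive.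

Lemma find_iota_first (P : pred nat) k : forall a N, k < N -> P (a + k) ->
  (forall i, i < k -> ~~ P (a + i)) -> find P (iota a N) = k.
Proof.
elim: k => [|k IH] a [|N] //= ltkN; first by rewrite addn0 => ->.
move=> Pk before_k; have := before_k 0 isT; rewrite addn0 => /negbTE ->.
congr S; apply: IH => //; first by rewrite addSnnS.
by move=> i lt_ik; rewrite addSnnS; apply: before_k.
Qed.

Section Hopping.
Variable m : nat.
Implicit Types (r : 'S_m) (x y z : 'I_m).

Definition ascent r x := x < r x.
Definition from_below r x := (r^-1)%g x < x.
Definition from_above r x := x < (r^-1)%g x.
Definition local_type r x :=
  (ascent r x, is_drop r x, from_below r x, from_above r x).

Definition double_ascent r x := from_below r x && ascent r x.
Definition odd_double_ascent r x := oddpos x && double_ascent r x.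

Definition double_drop_type := (false, true, false, true).

Lemma local_type_double_ascent r r' x :
  local_type r x = local_type r' x -> double_ascent r x = double_ascent r' x.
Proof. by rewrite /local_type /double_ascent => -[-> _ -> _]. Qed.

Lemma local_type_double_drop r r' x :
  local_type r x = local_type r' x -> double_drop r x = double_drop r' x.
Proof. by rewrite /local_type /double_drop /is_drop /from_above => -[_ -> _ ->]. Qed.

Lemma double_drop_typeP r x : local_type r x = double_drop_type -> double_drop r x.
Proof. by rewrite /local_type /double_drop /is_drop /from_above => -[_ -> _ ->]. Qed.

Lemma double_ascent_no_drop r x :
  double_ascent r x -> ~~ is_drop r x && ~~ from_above r x.
Proof.
case/andP=> xfb xasc; rewrite /is_drop /from_above.
by apply/andP; split; rewrite -leqNgt ltnW.
Qed.

Lemma double_ascentV r x : double_ascent (r^-1)%g x = double_drop r x.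
Proof.
by rewrite /double_ascent /double_drop /from_below /ascent /is_drop invgK andbC.
Qed.

Lemma preimage_iter r z : (r^-1)%g z = iter (#|porbit r z|).-1 r z.
Proof.
have orbit_gt0 : 0 < #|porbit r z| by rewrite lt0n card_porbit_neq0.
have iter_back : r (iter (#|porbit r z|).-1 r z) = z.
  by rewrite -iterS prednK // iter_porbit.
by rewrite -[in LHS]iter_back permK.
Qed.

Lemma porbit_image r x w : (r w \in porbit r x) = (w \in porbit r x).
Proof.
rewrite porbit_sym; have := porbit_perm r 1 w.
by rewrite expg1 => ->; rewrite -porbit_sym.
Qed.

Lemma cyclic_closed r (A : {set 'I_m}) x : is_cyclic r ->
  (forall w, w \in A -> r w \in A) -> x \in A -> forall y, y \in A.
Proof.
move=> /cards1P [P orbitsE] stableA xA y.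
have orbitE w : porbit r w = P by apply/set1P; rewrite -orbitsE; apply: imset_f.
have : y \in porbit r x by rewrite orbitE -(orbitE y) porbit_id.
case/porbitP => i ->; elim: i => [|i IH]; first by rewrite perm1.
by rewrite expgSr permM; apply: stableA.
Qed.

Lemma cyclicP r x0 : (forall x y, y \in porbit r x) -> is_cyclic r.
Proof.
move=> connected; apply/cards1P; exists (porbit r x0); apply/setP => P.
rewrite inE; apply/imsetP/eqP => [[x _ ->]|->]; last by exists x0.
by apply/eqP; rewrite eq_porbit_mem.
Qed.

Lemma cyclicV r : is_cyclic (r^-1)%g = is_cyclic r.
Proof. by rewrite /is_cyclic porbitsV. Qed.

Lemma cyclic_no_fixpoint r x : is_cyclic r -> 1 < m -> r x != x.
Proof.
move=> rcyc m_gt1; apply/eqP => rx.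
have stable w : w \in [set x] -> r w \in [set x] by move=> /set1P ->; rewrite rx set11.
have [m_gt0 ltm1m] : 0 < m /\ m.-1 < m by split; lia.
have /set1P lo := cyclic_closed rcyc stable (set11 x) (Ordinal m_gt0).
have /set1P hi := cyclic_closed rcyc stable (set11 x) (Ordinal ltm1m).
by move: (congr1 val (etrans lo (esym hi))) => /=; lia.
Qed.

(* The run of z: the elements r z, r^2 z, ... up to [run_end r z], the last
   one before the orbit of z first comes back below z.  It exists as soon as
   the preimage of z is below z, within 3m steps. *)
Definition run_test r z i := iter i.+2 r z < z.
Definition run_len r z := find (run_test r z) (iota 0 (3 * m)).
Definition run_end r z := iter (run_len r z).+1 r z.

(* Move z from between r^-1 z and r z to between run_end and its image. *)
Definition hop r z : 'S_m :=
  (tperm ((r^-1)%g z) z * tperm ((r^-1)%g z) (run_end r z) * r)%g.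

(* The run test succeeds after 3p - 3 steps, p the orbit length, where the
   orbit reaches r^-1 z; so [run_len] is its first success. *)
Lemma run_len_spec r z : from_below r z ->
  [/\ run_len r z < 3 * m, run_test r z (run_len r z) &
      forall i, i < run_len r z -> ~~ run_test r z i].
Proof.
move=> zfb; set p := #|porbit r z|.
have p_gt0 : 0 < p by rewrite lt0n card_porbit_neq0.
have le_pm : p <= m.
  by have := subset_leq_card (subsetT (porbit r z)); rewrite cardsT card_ord.
have witness : run_test r z (3 * p - 3).
  rewrite /run_test (_ : (3 * p - 3).+2 = p.-1 + p + p); last by lia.
  by rewrite !iterD !iter_porbit -preimage_iter.
have has_end : has (run_test r z) (iota 0 (3 * m)).
  by apply/hasP; exists (3 * p - 3) => //; rewrite mem_iota; lia.
have lt_len : run_len r z < 3 * m.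
  by have := has_find (run_test r z) (iota 0 (3 * m)); rewrite has_end size_iota.
split => //; first by have := nth_find 0 has_end; rewrite nth_iota ?add0n.
move=> i lt_i; have := before_find 0 lt_i; rewrite nth_iota ?add0n => [->//|].
exact: ltn_trans lt_i lt_len.
Qed.

Section OneHop.
Variables (r : 'S_m) (z : 'I_m).
Hypothesis zDA : double_ascent r z.

Lemma run_above j : 0 < j <= (run_len r z).+1 -> z < iter j r z.
Proof.
have [zfb zasc] := andP zDA; have [_ _ before] := run_len_spec zfb.
elim: j => [//|j IH] /andP[_ le_jK].
case: j IH le_jK => [|j] IH le_jK //.
have := before j (ltnSE le_jK); rewrite /run_test -leqNgt leq_eqVlt.
case/orP=> [/eqP back_at_z|//]; exfalso.
have : (r^-1)%g z = iter j.+1 r z.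
  by rewrite [in LHS](val_inj back_at_z) iterS permK.
by move=> pre; move: zfb (IH (ltnW le_jK)); rewrite /from_below pre; lia.
Qed.

Lemma run_end_spec : z < run_end r z /\ r (run_end r z) < z.
Proof.
have [zfb _] := andP zDA; have [_ test_end _] := run_len_spec zfb.
by split; [apply: run_above; rewrite /= leqnn | exact: test_end].
Qed.

Lemma run_inside_neq j : 0 < j < (run_len r z).+1 -> iter j r z != run_end r z.
Proof.
move=> /andP[j_gt0 lt_jK]; apply/eqP => at_end.
have := run_above (j := j.+1); rewrite iterS at_end.
by have [_ ?] := run_end_spec; lia.
Qed.

Lemma hop_points_neq :
  [/\ (r^-1)%g z != z, run_end r z != (r^-1)%g z & run_end r z != z].
Proof.
have [zfb _] := andP zDA; have [z_end _] := run_end_spec.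
by rewrite /from_below in zfb; split; apply/eqP => e; move: zfb z_end; rewrite e; lia.
Qed.

Lemma hopE x : hop r z x =
  if x == (r^-1)%g z then r z else if x == z then r (run_end r z)
  else if x == run_end r z then z else r x.
Proof.
have [ne_pz ne_ep ne_ez] := hop_points_neq; rewrite /hop !permM.
case: (eqVneq x ((r^-1)%g z)) => [->|ne_xp]; first by rewrite tpermL tpermD.
case: (eqVneq x z) => [->|ne_xz]; first by rewrite tpermR tpermL.
case: (eqVneq x (run_end r z)) => [->|ne_xe].
  have fixed : tperm ((r^-1)%g z) z (run_end r z) = run_end r z.
    by rewrite tpermD // eq_sym.
  by rewrite fixed tpermR permKV.
by rewrite !tpermD // eq_sym.
Qed.

Lemma hop_pred : hop r z ((r^-1)%g z) = r z.
Proof. by rewrite hopE eqxx. Qed.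

Lemma hop_at : hop r z z = r (run_end r z).
Proof. by have [ne_pz _ _] := hop_points_neq; rewrite hopE eq_sym (negbTE ne_pz) eqxx. Qed.

Lemma hop_run_end : hop r z (run_end r z) = z.
Proof.
by have [_ ne_ep ne_ez] := hop_points_neq; rewrite hopE (negbTE ne_ep) (negbTE ne_ez) eqxx.
Qed.

Lemma hop_elsewhere x : x != (r^-1)%g z -> x != z -> x != run_end r z ->
  hop r z x = r x.
Proof. by move=> /negbTE ne_xp /negbTE ne_xz /negbTE ne_xe; rewrite hopE ne_xp ne_xz ne_xe. Qed.

Lemma hop_run j : 0 < j < (run_len r z).+1 -> hop r z (iter j r z) = iter j.+1 r z.
Proof.
move=> j_in; have z_lt : z < iter j r z.
  by apply: run_above; case/andP: j_in => -> /ltnW ->.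
have [zfb _] := andP zDA; rewrite /from_below in zfb.
rewrite hop_elsewhere ?run_inside_neq //; apply/eqP => e; move: z_lt; rewrite e; lia.
Qed.

Lemma hop_image_cmp x : x != z ->
  (hop r z x < x) = (r x < x) /\ (x < hop r z x) = (x < r x).
Proof.
move=> ne_xz; have [z_end end_below] := run_end_spec.
have [zfb zasc] := andP zDA; rewrite /from_below /ascent in zfb zasc.
rewrite hopE (negbTE ne_xz).
case: (eqVneq x ((r^-1)%g z)) => [->|_]; first by rewrite permKV; split; lia.
by case: (eqVneq x (run_end r z)) => [->|_] //; split; lia.
Qed.

Lemma hop_preimage_cmp x : x != z ->
  (((hop r z)^-1)%g x < x) = ((r^-1)%g x < x) /\
  (x < ((hop r z)^-1)%g x) = (x < (r^-1)%g x).
Proof.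
move=> ne_xz; have [z_end end_below] := run_end_spec.
have [zfb zasc] := andP zDA; rewrite /from_below /ascent in zfb zasc.
set w := ((hop r z)^-1)%g x.
have : hop r z w = x by rewrite /w permKV.
rewrite hopE; case: (eqVneq w ((r^-1)%g z)) => [->|_].
  by move=> <-; rewrite permK; split; lia.
case: (eqVneq w z) => [->|_]; first by move=> <-; rewrite permK; split; lia.
case: (eqVneq w (run_end r z)) => [_ e|_]; first by rewrite e eqxx in ne_xz.
by move=> <-; rewrite permK.
Qed.

Lemma hop_local_type x : x != z -> local_type (hop r z) x = local_type r x.
Proof.
move=> ne_xz; have [img1 img2] := hop_image_cmp ne_xz.
have [pre1 pre2] := hop_preimage_cmp ne_xz.
by rewrite /local_type /ascent /is_drop /from_below /from_above img1 img2 pre1 pre2.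
Qed.

Lemma hopV_at : ((hop r z)^-1)%g z = run_end r z.
Proof. by apply: (@perm_inj _ (hop r z)); rewrite permKV hop_run_end. Qed.

(* After the hop, z sits between run_end (above it) and r run_end (below). *)
Lemma hop_local_type_at : local_type (hop r z) z = double_drop_type.
Proof.
have [z_end end_below] := run_end_spec.
rewrite /local_type /ascent /is_drop /from_below /from_above hop_at hopV_at.
by congr (_, _, _, _); apply/idP/idP; lia.
Qed.

Lemma dropn_hop : dropn (hop r z) = (dropn r).+1.
Proof.
have drops : [set i | is_drop (hop r z) i] = z |: [set i | is_drop r i].
  apply/setP => x; rewrite !inE; case: (eqVneq x z) => [->|ne_xz] /=.
    by have := hop_local_type_at; case.
  by have := hop_local_type ne_xz; case.
have /andP[z_not_drop _] := double_ascent_no_drop zDA.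
by rewrite /dropn drops cardsU1 inE z_not_drop.
Qed.

(* The hop keeps r an m-cycle: the run, z and r^-1 z all stay in one orbit. *)
Lemma hop_cyclic : is_cyclic r -> is_cyclic (hop r z).
Proof.
move=> rcyc; apply: (cyclicP z) => x y.
set A := porbit (hop r z) x.
have hopA w : (hop r z w \in A) = (w \in A) by apply: porbit_image.
have run_in j : 0 < j <= (run_len r z).+1 ->
    (iter j r z \in A) = ((r^-1)%g z \in A).
  elim: j => [//|j IH] /andP[_ le_jK].
  case: j IH le_jK => [|j] IH le_jK; first by rewrite /= -hop_pred hopA.
  by rewrite -hop_run ?hopA ?IH ?(ltnW le_jK).
have end_in : (run_end r z \in A) = ((r^-1)%g z \in A).
  by apply: run_in; rewrite /= leqnn.
have z_in : (z \in A) = (run_end r z \in A) by rewrite -[in RHS]hopA hop_run_end.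
apply: (cyclic_closed rcyc _ (porbit_id (hop r z) x)) => w wA.
case: (eqVneq w ((r^-1)%g z)) => [e|ne_wp]; first by rewrite e permKV z_in end_in -e.
case: (eqVneq w z) => [e|ne_wz]; first by rewrite e -hop_pred hopA -end_in -z_in -e.
case: (eqVneq w (run_end r z)) => [e|ne_we]; first by rewrite e -hop_at hopA z_in -e.
by rewrite -hop_elsewhere // hopA.
Qed.

Lemma hopV_iter j : 0 < j <= (run_len r z).+1 ->
  iter j ((hop r z)^-1)%g z = iter ((run_len r z).+2 - j) r z.
Proof.
elim: j => [//|j IH] /andP[_ le_jK].
case: j IH le_jK => [|j] IH le_jK; first by rewrite subn1 /= hopV_at.
rewrite iterS IH ?(ltnW le_jK) //.
rewrite (_ : (run_len r z).+2 - j.+1 = ((run_len r z).+2 - j.+2).+1); last by lia.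
by rewrite -hop_run ?permK //; lia.
Qed.

Lemma hopV_iter_end : iter (run_len r z).+2 ((hop r z)^-1)%g z = (r^-1)%g z.
Proof. by rewrite iterS hopV_iter ?leqnn // subSS subSn // subnn /= -hop_pred permK. Qed.

Lemma hopV_double_ascent : double_ascent ((hop r z)^-1)%g z.
Proof.
have [z_end end_below] := run_end_spec.
by rewrite /double_ascent /from_below /ascent invgK hop_at hopV_at end_below.
Qed.

Lemma run_len_hopV : run_len ((hop r z)^-1)%g z = run_len r z.
Proof.
have [zfb _] := andP zDA; have [lt_len _ _] := run_len_spec zfb.
apply: find_iota_first => //; first by rewrite /run_test add0n hopV_iter_end.
move=> i lt_i; rewrite /run_test add0n hopV_iter; last by lia.
by rewrite -leqNgt ltnW // run_above //; lia.
Qed.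

Lemma run_end_hopV : run_end ((hop r z)^-1)%g z = r z.
Proof. by rewrite /run_end run_len_hopV hopV_iter ?leqnn // subSS subSn // subnn. Qed.

End OneHop.

Lemma hop_hopV r z : double_ascent r z -> hop ((hop r z)^-1)%g z = (r^-1)%g.
Proof.
move=> zDA; have muDA := hopV_double_ascent zDA.
have hopV w v : hop r z w = v -> ((hop r z)^-1)%g v = w by move=> <-; rewrite permK.
apply/permP => x.
rewrite (hopE muDA) invgK (hop_at zDA) (hopV_at zDA) (run_end_hopV zDA).
case: (eqVneq x (r (run_end r z))) => [->|ne_end]; first by rewrite permK.
case: (eqVneq x z) => [->|ne_z]; first by apply: hopV; exact: hop_pred.
case: (eqVneq x (r z)) => [->|ne_rz]; first by rewrite permK.
apply: hopV; rewrite hop_elsewhere ?permKV //.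
- by rewrite (inj_eq perm_inj).
- by apply: contra_neq ne_rz => <-; rewrite permKV.
- by apply: contra_neq ne_end => <-; rewrite permKV.
Qed.

Definition unhop r z : 'S_m := ((hop (r^-1)%g z)^-1)%g.

Lemma unhop_hop r z : double_ascent r z -> unhop (hop r z) z = r.
Proof. by move=> zDA; rewrite /unhop hop_hopV // invgK. Qed.

Lemma hop_unhop r z : double_drop r z -> hop (unhop r z) z = r.
Proof. by rewrite -double_ascentV => zDA; rewrite /unhop hop_hopV // invgK. Qed.

Lemma unhop_double_ascent r z : double_drop r z -> double_ascent (unhop r z) z.
Proof.
rewrite -double_ascentV => zDA; rewrite /unhop double_ascentV.
exact/double_drop_typeP/hop_local_type_at.
Qed.

Lemma unhop_local_type r z x : double_drop r z -> x != z ->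
  local_type (unhop r z) x = local_type r x.
Proof.
move=> zDD ne_xz; rewrite -{2}(hop_unhop zDD).
by rewrite hop_local_type // unhop_double_ascent.
Qed.

Lemma unhop_cyclic r z : is_cyclic r -> double_drop r z -> is_cyclic (unhop r z).
Proof.
move=> rcyc zDD; rewrite /unhop cyclicV.
by apply: hop_cyclic; rewrite ?cyclicV ?double_ascentV.
Qed.

Lemma odd_odd_dropsE r : odd_odd_drops r =
  [forall x, (is_drop r x ==> oddpos x) && (from_above r x ==> oddpos x)].
Proof.
apply/forallP/forallP => oo x.
  apply/andP; split; apply/implyP => xdrop.
    by have /implyP/(_ xdrop)/andP[] := oo x.
  have pre_drop : is_drop r ((r^-1)%g x) by rewrite /is_drop permKV.
  by have /implyP/(_ pre_drop)/andP[_] := oo ((r^-1)%g x); rewrite permKV.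
apply/implyP => xdrop; apply/andP; split; first by have /andP[/implyP ->] := oo x.
by have /andP[_ /implyP] := oo (r x); apply; rewrite /from_above permK.
Qed.

Lemma odd_odd_drops_transfer r r' z : odd_odd_drops r ->
  (forall x, x != z -> local_type r' x = local_type r x) ->
  (is_drop r' z || from_above r' z -> oddpos z) -> odd_odd_drops r'.
Proof.
rewrite !odd_odd_dropsE => /forallP oo same_type z_odd; apply/forallP => x.
case: (eqVneq x z) => [->|ne_xz].
  by apply/andP; split; apply/implyP => zty; apply: z_odd; rewrite zty ?orbT.
by have := same_type x ne_xz; rewrite /local_type => -[_ -> _ ->]; exact: oo.
Qed.

Definition hops (l : seq 'I_m) r := foldr (fun z s => hop s z) r l.
Definition unhops (l : seq 'I_m) r := foldl (fun s z => unhop s z) r l.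

Lemma hopsP l : forall r, uniq l -> all (odd_double_ascent r) l -> inC r ->
  [/\ inC (hops l r),
      forall x, x \notin l -> local_type (hops l r) x = local_type r x,
      forall x, x \in l -> local_type (hops l r) x = double_drop_type,
      dropn (hops l r) = dropn r + size l & unhops l (hops l r) = r].
Proof.
elim: l => [|z l IH] r /=; first by move=> _ _ rC; split; rewrite ?addn0.
case/andP=> z_l l_uniq /andP[/andP[z_odd zDA] l_ODA] rC.
have [hC same_out dd_in dropsE back] := IH r l_uniq l_ODA rC.
have zDA' : double_ascent (hops l r) z by rewrite (local_type_double_ascent (same_out z z_l)).
have /andP[hcyc hoo] := hC.
split.
- rewrite /inC hop_cyclic //.
  by apply: (odd_odd_drops_transfer hoo) => [x|]; [exact: hop_local_type|].
- move=> x; rewrite inE negb_or => /andP[ne_xz x_l].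
  by rewrite hop_local_type // same_out.
- move=> x; rewrite inE => /orP[/eqP ->|x_l]; first exact: hop_local_type_at.
  have ne_xz : x != z by apply: contraNneq z_l => <-.
  by rewrite hop_local_type // dd_in.
- by rewrite dropn_hop // dropsE addnS.
- by rewrite /unhops /= unhop_hop // -/(unhops l _) back.
Qed.

Lemma unhopsP l : forall r, uniq l -> all (double_drop r) l -> inC r ->
  [/\ inC (unhops l r),
      forall x, x \notin l -> local_type (unhops l r) x = local_type r x,
      forall x, x \in l -> double_ascent (unhops l r) x & hops l (unhops l r) = r].
Proof.
elim: l => [|z l IH] r /=; first by move=> _ _ rC; split.
case/andP=> z_l l_uniq /andP[zDD l_DD] /andP[rcyc roo].
set r' := unhop r z.
have zDA := unhop_double_ascent zDD.
have same_type x : x != z -> local_type r' x = local_type r x.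
  exact: unhop_local_type.
have r'C : inC r'.
  rewrite /inC unhop_cyclic //; apply: (odd_odd_drops_transfer roo same_type).
  by have /andP[/negbTE -> /negbTE ->] := double_ascent_no_drop zDA.
have l_DD' : all (double_drop r') l.
  apply/allP => x x_l; have ne_xz : x != z by apply: contraNneq z_l => <-.
  by rewrite (local_type_double_drop (same_type x ne_xz)); exact: (allP l_DD).
have [uC same_out da_in back] := IH r' l_uniq l_DD' r'C.
rewrite /unhops /= -/r' -/(unhops l r'); split => //.
- move=> x; rewrite inE negb_or => /andP[ne_xz x_l].
  by rewrite same_out // same_type.
- move=> x; rewrite inE => /orP[/eqP ->|]; last exact: da_in.
  by rewrite (local_type_double_ascent (same_out z z_l)).
- by rewrite /hops /= -/(hops l _) back hop_unhop.
Qed.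

(* An m-cycle (m > 1) has a drop, at its largest element. *)
Lemma dropn_gt0 r : is_cyclic r -> 1 < m -> 0 < dropn r.
Proof.
move=> rcyc m_gt1; have ltm1m : m.-1 < m by lia.
set top := Ordinal ltm1m.
rewrite /dropn card_gt0; apply/set0Pn; exists top; rewrite inE /is_drop.
have := cyclic_no_fixpoint top rcyc m_gt1.
have : r top < m by [].
by rewrite -(inj_eq val_inj) /=; lia.
Qed.

(* There are m./2 elements of 'I_m standing for even integers. *)
Lemma card_even_points : #|[set x : 'I_m | odd x]| = m./2.
Proof.
rewrite -sum1_card big_mkcond /=.
rewrite (eq_bigr (fun i : 'I_m => (odd i : nat))); last first.
  by move=> i _; rewrite inE; case: (odd i).
elim: m => [|k IH]; first by rewrite big_ord0.
by rewrite big_ord_recr /= IH uphalf_half addnC.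
Qed.

Lemma double_ascentE r x : is_cyclic r -> 1 < m ->
  double_ascent r x = ~~ is_drop r x && ~~ from_above r x.
Proof.
move=> rcyc m_gt1; have ne_img := cyclic_no_fixpoint x rcyc m_gt1.
have ne_pre : (r^-1)%g x != x.
  by apply: contra ne_img => /eqP e; rewrite -{1}e permKV.
move: ne_img ne_pre; rewrite -!(inj_eq val_inj) /=.
rewrite /double_ascent /from_below /ascent /is_drop /from_above => ne_img ne_pre.
by apply/idP/idP; lia.
Qed.

(* A primary element of C_m (m > 1) has m - m./2 - 2 drop(r) odd double
   ascents: the points that are neither even nor a drop position nor a drop
   value, the last two sets being disjoint and equinumerous. *)
Lemma card_odd_double_ascents r : primary r -> 1 < m ->
  #|[set x | odd_double_ascent r x]| + 2 * dropn r + m./2 = m.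
Proof.
case/andP=> /andP[rcyc roo] /forallP no_dd m_gt1.
set P := [set x | is_drop r x]; set Q := [set x | from_above r x].
have card_Q : #|Q| = #|P|.
  have -> : Q = (r^-1)%g @^-1: P.
    by apply/setP => x; rewrite !inE /is_drop /from_above permKV.
  exact/card_preimset/perm_inj.
have PQ0 : P :&: Q = set0.
  by apply/setP => x; rewrite !inE andbC; apply/negbTE/no_dd.
have DAE : [set x | double_ascent r x] = ~: (P :|: Q).
  by apply/setP => x; rewrite !inE negb_or double_ascentE.
have evens : [set x : 'I_m | odd x] \subset [set x | double_ascent r x].
  apply/subsetP => x; rewrite !inE double_ascentE // => x_even.
  move: roo; rewrite odd_odd_dropsE => /forallP/(_ x).
  by rewrite /oddpos /= x_even /= !implybF.
have ODAE : [set x | odd_double_ascent r x] =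
            [set x | double_ascent r x] :\: [set x : 'I_m | odd x].
  by apply/setP => x; rewrite !inE /odd_double_ascent /oddpos /= andbC.
have := cardsC (P :|: Q); rewrite cardsU PQ0 cards0 subn0 card_ord -DAE.
have := cardsID [set x : 'I_m | odd x] [set x | double_ascent r x].
rewrite (setIidPr evens) -ODAE card_even_points /dropn -/P.
lia.
Qed.

Definition double_drops r := [set x | double_drop r x].
Definition decompose r := (unhops (enum (double_drops r)) r, double_drops r).
Definition compose (p : 'S_m * {set 'I_m}) := hops (enum p.2) p.1.

Definition admissible (p : 'S_m * {set 'I_m}) :=
  primary p.1 && (p.2 \subset [set x | odd_double_ascent p.1 x]).

Lemma decomposeK r : inC r -> compose (decompose r) = r /\ admissible (decompose r).
Proof.
move=> rC; have /andP[_ roo] := rC.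
have l_DD : all (double_drop r) (enum (double_drops r)).
  by apply/allP => x; rewrite mem_enum inE.
have [piC same_out da_in back] := unhopsP (enum_uniq _) l_DD rC.
split => //; apply/andP; split => /=.
  rewrite /primary piC; apply/forallP => x.
  case: (boolP (x \in enum (double_drops r))) => x_l.
    have /double_ascent_no_drop/andP[no_drop _] := da_in x x_l.
    by apply: contraNN no_drop; case/andP.
  rewrite (local_type_double_drop (same_out x x_l)).
  by move: x_l; rewrite mem_enum inE.
apply/subsetP => x; rewrite inE => xDD.
rewrite inE /odd_double_ascent da_in ?mem_enum ?inE // andbT.
move: roo; rewrite odd_odd_dropsE => /forallP/(_ x)/andP[/implyP drop_odd _].
by apply: drop_odd; case/andP: xDD.
Qed.

Lemma composeK p : admissible p ->
  [/\ inC (compose p), decompose (compose p) = p &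
      dropn (compose p) = dropn p.1 + #|p.2|].
Proof.
case: p => pi S /andP[/= piP S_ODA]; have /andP[piC _] := piP.
have l_ODA : all (odd_double_ascent pi) (enum S).
  by apply/allP => x; rewrite mem_enum => /(subsetP S_ODA); rewrite inE.
have [rC same_out dd_in dropsE back] := hopsP (enum_uniq _) l_ODA piC.
have DDE : double_drops (compose (pi, S)) = S.
  apply/setP => x; rewrite inE; case: (boolP (x \in S)) => xS.
    by apply/double_drop_typeP/dd_in; rewrite mem_enum.
  rewrite (local_type_double_drop (same_out x _)) ?mem_enum //.
  by have /andP[_ /forallP no_dd] := piP; apply/negbTE/no_dd.
split => //; first by rewrite /decompose DDE /compose /= back.
by rewrite /compose /= dropsE cardE.
Qed.

End Hopping.

Local Open Scope ring_scope.

Lemma sum_subsets_pow (R : comPzSemiRingType) (T : finType) (A : {set T}) (x : R) :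
  \sum_(S : {set T} | S \subset A) x ^+ #|S| = (1 + x) ^+ #|A|.
Proof.
have := @bigA_distr R 0 1 *%R +%R T (fun i => if i \in A then x else 0) (fun _ => 1).
rewrite (eq_bigr (fun i => if i \in A then 1 + x else 1)); last first.
  by move=> i _; case: (i \in A) => /=; rewrite ?add0r // addrC.
rewrite -big_mkcond prodr_const => ->.
rewrite big_mkcond /=; apply: eq_big => // J _; rewrite -big_mkcond /=.
case: (boolP (J \subset A)) => [JA|/subsetPn [i iJ iA]].
  by rewrite (eq_bigr (fun _ => x)) ?prodr_const // => i /(subsetP JA) ->.
by rewrite (bigD1 i) //= (negbTE iA) mul0r.
Qed.

Lemma drop_polynomial_primary (R : comNzRingType) (m : nat) : (1 < m)%N ->
  \sum_(s : 'S_m | inC s) ('X^(dropn s - 1) : {poly R}) =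
  \sum_(pi : 'S_m | primary pi)
    'X^(dropn pi - 1) * (1 + 'X) ^+ #|[set x | odd_double_ascent pi x]|.
Proof.
move=> m_gt1.
rewrite (reindex_onto (@compose m) (@decompose m)); last first.
  by move=> s sC; case: (decomposeK sC).
rewrite (eq_bigl (@admissible m)); last first.
  move=> p; apply/idP/idP => [/andP[sC /eqP <-]|pA]; first by case: (decomposeK sC).
  by have [-> -> _] := composeK pA; rewrite eqxx.
rewrite (eq_bigr (fun p : 'S_m * {set 'I_m} =>
  'X^(dropn p.1 - 1) * 'X^#|p.2| : {poly R})); last first.
  move=> p pA; have [_ _ ->] := composeK pA; rewrite -exprD; congr (_ ^+ _).
  have : (0 < dropn p.1)%N by apply: dropn_gt0 m_gt1; case/andP: pA => /andP[/andP[]].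
  lia.
rewrite -(pair_big_dep (fun pi : 'S_m => primary pi)
  (fun pi (S : {set 'I_m}) => S \subset [set x | odd_double_ascent pi x])
  (fun pi S => 'X^(dropn pi - 1) * 'X^#|S| : {poly R})).
by apply: eq_bigr => pi _; rewrite -big_distrr /= sum_subsets_pow.
Qed.

Lemma primary_counts n (pi : 'S_(2 * n + 3)) : primary pi ->
  [/\ (0 < dropn pi)%N, (dropn pi - 1 <= n./2)%N &
      #|[set x | odd_double_ascent pi x]| = (n - 2 * (dropn pi - 1))%N].
Proof.
move=> piP; have m_gt1 : (1 < 2 * n + 3)%N by lia.
have half_m : ((2 * n + 3)./2 = n.+1)%N.
  by rewrite (_ : 2 * n + 3 = true + (n.+1).*2)%N ?half_bit_double // -mul2n; lia.
have d_gt0 : (0 < dropn pi)%N by apply: dropn_gt0 m_gt1; case/andP: piP => /andP[].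
have := card_odd_double_ascents piP m_gt1; rewrite half_m.
have := odd_double_half n; rewrite -mul2n => n_halves counts.
by split => //; lia.
Qed.

(* n must stay an explicit argument of the theorem. *)
Unset Implicit Arguments.

Theorem mainTheorem11 (n : nat) (hn : (1 <= n)%N) :
  \sum_(s : 'S_(2 * n + 3) | inC s) ('X^(dropn s - 1) : {poly int})
  = \sum_(j < n./2.+1)
      (gamma n j)%:R *: ('X^j * (1 + 'X) ^+ (n - 2 * j)).
Proof.
rewrite drop_polynomial_primary; last by lia.
rewrite (partition_big (fun pi : 'S_(2 * n + 3) =>
  inord (dropn pi - 1) : 'I_(n./2.+1)) xpredT) //=.
apply: eq_bigr => j _; rewrite /gamma scaler_nat -sumr_const.
apply: eq_big => pi.
  rewrite inE; case: (boolP (primary pi)) => //= piP.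
  have [d_gt0 d_le _] := primary_counts piP.
  by rewrite -(inj_eq val_inj) /= inordK //; apply/eqP/eqP; lia.
case/andP=> piP /eqP <-; have [_ d_le ->] := primary_counts piP.
by rewrite inordK.
Qed.
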